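(* Let $G$ be a unit interval graph, i.e. the intersection graph of a finite family of closed intervals of the real line all of length one. Then $p(G)\le 2$.
   Context: A comparability graph is a graph admitting a transitive orientation. $p(G)$ is the minimum number $m$ such that $E(G)$ is the union of the edge sets of $m$ pairwise edge-disjoint comparability subgraphs of $G$. *)

From mathcomp Require Import all_boot.
From Stdlib Require Import Reals.
Set Implicit Arguments. Unset Strict Implicit. Unset Printing Implicit Defensive.

(* A finite simple graph G is given by a finite vertex type T and an
   adjacency relation e : rel T (edge set E(G) = unordered pairs {x,y}
   with e x y). *)

Definition unit_interval (a : R) : R -> Prop := fun z => (a <= z <= a + 1)%R.

Definition unit_interval_graph (T : finType) (e : rel T) : Prop :=
  exists a : T -> R, forall x y : T,
    e x y <-> (x <> y /\ exists z : R, unit_interval (a x) z /\ unit_interval (a y) z).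

Definition transitive_orientation (T : finType) (F : rel T) (o : rel T) : Prop :=
  (forall x y, F x y = (o x y || o y x)) /\
  (forall x y, o x y -> ~~ o y x) /\
  (forall x y z, o x y -> o y z -> o x z).

Definition comparability_graph (T : finType) (F : rel T) : Prop :=
  exists o : rel T, transitive_orientation F o.

Definition comparability_cover (T : finType) (e : rel T) (m : nat)
    (Fs : 'I_m -> rel T) : Prop :=
  (forall i x y, Fs i x y = Fs i y x) /\
  (forall i x y, Fs i x y -> e x y) /\
  (forall i j x y, i != j -> Fs i x y -> ~~ Fs j x y) /\
  (forall x y, e x y -> exists i, Fs i x y) /\
  (forall i, comparability_graph (Fs i)).

(* p(G) <= k : the minimum such m is at most k, i.e. some m <= k works. *)
Definition p_le (T : finType) (e : rel T) (k : nat) : Prop :=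
  exists m : nat, (m <= k)%N /\ exists Fs : 'I_m -> rel T, @comparability_cover T e m Fs.

(* Let [a x, a x + 1] be the interval of the vertex x and sort the vertices
   into buckets by the integer part of a x.  Vertices in a common bucket are
   adjacent, and adjacent vertices lie in equal or consecutive buckets.  Hence
   E(G) splits into the edges inside buckets, a disjoint union of cliques
   (oriented along any linear order of the vertices), and the edges between
   consecutive buckets, which form a bipartite graph for the parity of the
   bucket (oriented from even to odd). *)
From mathcomp Require Import all_boot.
From mathcomp Require Import ssrZ.
From Stdlib Require Import Reals.
From Stdlib Require Import Lra Lia ZArith.

Set Implicit Arguments.
Unset Strict Implicit.
Unset Printing Implicit Defensive.

Section ComparabilityGraphs.

Variable T : finType.

Lemma comparability_cliques (K : eqType) (k : T -> K) (F : rel T) :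
  (forall x y, F x y = (x != y) && (k x == k y)) -> comparability_graph F.
Proof.
move=> Fdef; exists [rel x y | F x y && (enum_rank x < enum_rank y)%nat].
split; [|split] => [x y | x y | x y z] /=.
- rewrite [F y x]Fdef eq_sym [k y == _]eq_sym -Fdef.
  case Fxy: (F x y) => //=; rewrite -neq_ltn; symmetry.
  by apply: contraTneq Fxy => /ord_inj/enum_rank_inj->; rewrite Fdef eqxx.
- by case/andP=> _ lt_xy; apply/nandP; right; rewrite -leqNgt ltnW.
- rewrite !Fdef => /andP[/andP[_ /eqP kxy] lt_xy] /andP[/andP[_ /eqP kyz] lt_yz].
  have lt_xz := ltn_trans lt_xy lt_yz.
  rewrite lt_xz kxy kyz eqxx !andbT.
  by apply: contraTneq lt_xz => ->; rewrite ltnn.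
Qed.

Lemma comparability_bipartite (c : T -> bool) (F : rel T) :
  symmetric F -> (forall x y, F x y -> c x != c y) -> comparability_graph F.
Proof.
move=> Fsym Fc; exists [rel x y | F x y && c x].
split; [|split] => [x y | x y | x y z] /=.
- rewrite [F y x]Fsym; case Fxy: (F x y) => //=.
  by move: (Fc _ _ Fxy); case: (c x); case: (c y).
- case/andP=> /Fc; rewrite Fsym.
  by case: (c x); case: (c y); rewrite ?andbF.
- by case/andP=> /Fc; case: (c x); case: (c y) => // _ _ /andP[].
Qed.

Lemma p_le2_split (e P : rel T) : symmetric e -> symmetric P ->
  comparability_graph [rel x y | e x y && P x y] ->
  comparability_graph [rel x y | e x y && ~~ P x y] -> p_le e 2.
Proof.
move=> esym Psym compP compNP; exists 2; split=> //.
exists (fun i : 'I_2 => if i == ord0 then [rel x y | e x y && P x y]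
                        else [rel x y | e x y && ~~ P x y]).
split; [|split; [|split; [|split]]].
- by case=> [[|[|//]] ?] x y /=; rewrite esym Psym.
- by case=> [[|[|//]] ?] x y /= /andP[].
- by case=> [[|[|//]] ?] [[|[|//]] ?] x y //= _; case: (e x y); case: (P x y).
- move=> x y exy; case Pxy: (P x y).
  + by exists ord0; rewrite /= exy Pxy.
  + by exists (@Ordinal 2 1 isT); rewrite /= exy Pxy.
- by case=> [[|[|//]] ?].
Qed.

End ComparabilityGraphs.

Lemma unit_intervals_meet (b c : R) :
  (exists z, unit_interval b z /\ unit_interval c z) <-> (Rabs (b - c) <= 1)%R.
Proof.
rewrite /unit_interval; split=> [[z [bz cz]] | bc]; first by split_Rabs; lra.
case: (Rle_dec b c) => [le_bc | lt_cb].
- by exists c; split_Rabs; lra.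
- by exists b; split_Rabs; lra.
Qed.

Lemma Zfloor_dist_le1 (r s : R) :
  (Rabs (r - s) <= 1)%R -> (Z.abs (Zfloor r - Zfloor s) <= 1)%Z.
Proof.
move=> rs; have [fr_le_r r_lt] := Zfloor_bound r.
have [fs_le_s s_lt] := Zfloor_bound s.
have /lt_IZR lt_rs : (IZR (Zfloor r) < IZR (Zfloor s + 2))%R.
  by rewrite plus_IZR; split_Rabs; lra.
have /lt_IZR lt_sr : (IZR (Zfloor s) < IZR (Zfloor r + 2))%R.
  by rewrite plus_IZR; split_Rabs; lra.
lia.
Qed.

Lemma Zfloor_eq_dist_le1 (r s : R) : Zfloor r = Zfloor s -> (Rabs (r - s) <= 1)%R.
Proof.
move=> frs; have := Zfloor_bound r; have := Zfloor_bound s.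
by rewrite frs; split_Rabs; lra.
Qed.

Lemma Z_even_neighbours (m n : Z) :
  m != n -> (Z.abs (m - n) <= 1)%Z -> Z.even m != Z.even n.
Proof.
move=> /eqP neq_mn mn; have := Z.even_sub m n.
have [->|->] : (m - n = 1 \/ m - n = -1)%Z by lia.
all: by case: (Z.even m); case: (Z.even n).
Qed.

Section UnitIntervalGraph.

Variables (T : finType) (e : rel T) (a : T -> R).
Hypothesis ea : forall x y : T,
  e x y <-> (x <> y /\ exists z, unit_interval (a x) z /\ unit_interval (a y) z).

Lemma unit_interval_adjE x y : e x y <-> x <> y /\ (Rabs (a x - a y) <= 1)%R.
Proof. by rewrite ea unit_intervals_meet. Qed.

Lemma unit_interval_adj_sym : symmetric e.
Proof.
move=> x y; apply/idP/idP => /unit_interval_adjE[neq le1].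
all: apply/unit_interval_adjE.
all: by split; [move=> eq_xy; apply: neq | rewrite Rabs_minus_sym].
Qed.

Lemma comparability_same_floor :
  comparability_graph [rel x y | e x y && (Zfloor (a x) == Zfloor (a y))].
Proof.
apply: (comparability_cliques (k := fun x => Zfloor (a x))) => x y /=.
case: eqP => [eq_floor | _]; last by rewrite !andbF.
rewrite !andbT; apply/idP/idP => [/unit_interval_adjE[/eqP] // | /eqP neq].
by apply/unit_interval_adjE; split=> //; apply: Zfloor_eq_dist_le1.
Qed.

Lemma comparability_distinct_floor :
  comparability_graph [rel x y | e x y && (Zfloor (a x) != Zfloor (a y))].
Proof.
apply: (comparability_bipartite (c := fun x => Z.even (Zfloor (a x)))).
  by move=> x y /=; rewrite unit_interval_adj_sym eq_sym.
move=> x y /= /andP[/unit_interval_adjE[_ le1] neq].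
by apply: Z_even_neighbours neq _; apply: Zfloor_dist_le1.
Qed.

End UnitIntervalGraph.

Theorem theorem5 (T : finType) (e : rel T) :
  unit_interval_graph e -> p_le e 2.
Proof.
case=> a ea.
apply: (p_le2_split (unit_interval_adj_sym ea) _ (comparability_same_floor ea)
                    (comparability_distinct_floor ea)).
by move=> x y /=; rewrite eq_sym.
Qed.
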